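(* Let $P$ be a poset that is both directed and codirected, and let $M\colon P\to\mathbf{Vec}$ be pointwise finite-dimensional with $M_p\neq0$ for all $p\in P$ and with $M(p\le q)\colon M_p\to M_q$ surjective for all $p\le q$. Then $M$ has a direct summand isomorphic to $k_P$.
   Context: $P$ is directed if any two elements have a common upper bound in $P$, codirected if any two elements have a common lower bound in $P$. Persistence modules over $P$ are functors $P\to\mathbf{Vec}$ with structure maps $M(p\le q)$. $k_P$ is the module with $k$ at every point and identity structure maps. *)

From HB Require Import structures.
From mathcomp Require Import all_boot all_order all_algebra.
Set Implicit Arguments. Unset Strict Implicit. Unset Printing Implicit Defensive.
Import Order.TTheory GRing.Theory.
Local Open Scope ring_scope.

Definition directed (d : Order.disp_t) (P : porderType d) : Prop :=
  forall p q : P, exists r : P, (p <= r)%O /\ (q <= r)%O.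
Definition codirected (d : Order.disp_t) (P : porderType d) : Prop :=
  forall p q : P, exists r : P, (r <= p)%O /\ (r <= q)%O.

(* A pointwise finite-dimensional persistence module over P with values in
   k-vector spaces: finite-dimensionality is built in through vectType. *)
Record pfdmod (k : fieldType) (d : Order.disp_t) (P : porderType d) := PFDMod {
  pm_obj : P -> vectType k;
  pm_map : forall p q : P, (p <= q)%O -> 'Hom(pm_obj p, pm_obj q);
  pm_id : forall (p : P) (h : (p <= p)%O), pm_map h = \1%VF;
  pm_comp : forall (p q r : P) (hpq : (p <= q)%O) (hqr : (q <= r)%O)
              (hpr : (p <= r)%O),
      pm_map hpr = (pm_map hqr \o pm_map hpq)%VF
}.

Definition kP_obj (k : fieldType) (d : Order.disp_t) (P : porderType d)
  (p : P) : vectType k := k^o.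
Definition kP_map (k : fieldType) (d : Order.disp_t) (P : porderType d)
  (p q : P) (h : (p <= q)%O) : 'Hom(kP_obj k p, kP_obj k q) := \1%VF.
Lemma kP_id (k : fieldType) (d : Order.disp_t) (P : porderType d)
  (p : P) (h : (p <= p)%O) : kP_map k h = \1%VF.
Proof. by []. Qed.
Lemma kP_comp (k : fieldType) (d : Order.disp_t) (P : porderType d)
  (p q r : P) (hpq : (p <= q)%O) (hqr : (q <= r)%O) (hpr : (p <= r)%O) :
  kP_map k hpr = (kP_map k hqr \o kP_map k hpq)%VF.
Proof. by rewrite /kP_map comp_lfun1l. Qed.
Definition kP (k : fieldType) (d : Order.disp_t) (P : porderType d)
  : pfdmod k P := PFDMod (@kP_id k d P) (@kP_comp k d P).

Definition is_morph (k : fieldType) (d : Order.disp_t) (P : porderType d)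
  (M N : pfdmod k P) (phi : forall p : P, 'Hom(pm_obj M p, pm_obj N p)) : Prop :=
  forall (p q : P) (h : (p <= q)%O),
    (pm_map N h \o phi p)%VF = (phi q \o pm_map M h)%VF.

Definition is_submod (k : fieldType) (d : Order.disp_t) (P : porderType d)
  (M : pfdmod k P) (N : forall p : P, {vspace pm_obj M p}) : Prop :=
  forall (p q : P) (h : (p <= q)%O), (pm_map M h @: N p <= N q)%VS.

(* M has a direct summand isomorphic to X: there are submodules N, C with
   M = N (+) C pointwise, and a natural isomorphism from X onto N, i.e. a
   morphism X -> M which is pointwise injective with image N. *)
Definition has_summand_iso (k : fieldType) (d : Order.disp_t) (P : porderType d)
  (M X : pfdmod k P) : Prop :=
  exists (N C : forall p : P, {vspace pm_obj M p})
         (phi : forall p : P, 'Hom(pm_obj X p, pm_obj M p)),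
    [/\ is_submod N, is_submod C,
        forall p, (N p + C p)%VS = fullv /\ (N p :&: C p)%VS = 0%VS,
        is_morph phi &
        forall p, lker (phi p) = 0%VS /\ limg (phi p) = N p].

From HB Require Import structures.
From mathcomp Require Import all_boot all_order all_algebra.
From mathcomp Require Import boolp classical_sets zify.
Import Order.TTheory GRing.Theory.
Set Implicit Arguments. Unset Strict Implicit. Unset Printing Implicit Defensive.
Local Open Scope ring_scope.

(* Let M be a pointwise finite-dimensional module over a directed and codirected
   poset P, with nonzero values and surjective structure maps.
   - Surjectivity gives dim M_q <= dim M_p for p <= q, so at a point p0 of minimal
     dimension, and at every point above it, the structure maps are injective.
   - The inverse limit of M surjects onto M_p0: every x0 extends to a compatible
     family (v p)_p.  This uses codirectedness and Zorn's lemma on "coherent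
     systems" of nonempty affine subsets of the M_p; chains have lower bounds
     because a chain of nonempty affine subspaces of a finite-dimensional space
     has a least element.
   - For x0 <> 0 the lines <[v p]> form a submodule isomorphic to k_P (each v p is
     nonzero by directedness and injectivity above p0).  A complementary submodule
     consists, at p, of the x whose image in a common upper bound of p and p0 is
     the image of an element of a fixed complement of <[x0]> in M_p0. *)

Lemma ex_maxn_prop (Q : nat -> Prop) (n0 N : nat) :
  Q n0 -> (forall n, Q n -> (n <= N)%N) ->
  exists2 n, Q n & forall m, Q m -> (m <= n)%N.
Proof.
move=> Qn0 QN.
have exQ : exists n, `[< Q n >] by exists n0; apply/asboolP.
have boundQ n : `[< Q n >] -> (n <= N)%N by move/asboolP; apply: QN.
case: (ex_maxnP exQ boundQ) => n /asboolP Qn nmax.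
by exists n => // m Qm; apply/nmax/asboolP.
Qed.

Lemma ex_minn_prop (Q : nat -> Prop) (n0 : nat) :
  Q n0 -> exists2 n, Q n & forall m, Q m -> (n <= m)%N.
Proof.
move=> Qn0.
have exQ : exists n, `[< Q n >] by exists n0; apply/asboolP.
case: (ex_minnP exQ) => n /asboolP Qn nmin.
by exists n => // m Qm; apply/nmin/asboolP.
Qed.

Section AffineSubsets.
Variables (k : fieldType) (V : vectType k).

Definition affine_closed (B : V -> Prop) : Prop :=
  forall x y z (l : k), B x -> B y -> B z -> B (x + l *: (y - z)).

(* A predicate containing 0 and closed under [x + l *: y] is a subspace: it is
   the largest subspace it contains. *)
Lemma linear_closed_vspace (S : V -> Prop) :
  S 0 -> (forall x y (l : k), S x -> S y -> S (x + l *: y)) ->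
  exists U : {vspace V}, forall x, S x <-> x \in U.
Proof.
move=> S0 Scl.
pose inS n := exists U : {vspace V}, (forall x, x \in U -> S x) /\ \dim U = n.
have inS0 : inS 0%N.
  by exists 0%VS; rewrite dimv0; split=> // x; rewrite memv0 => /eqP ->.
have inS_bound n : inS n -> (n <= \dim {:V})%N.
  by case=> U [_ <-]; apply/dimvS/subvf.
have [_ [U [US <-]] Umax] := ex_maxn_prop inS0 inS_bound.
exists U => x; split=> [Sx|]; last exact: US.
have UxS y : y \in (U + <[x]>)%VS -> S y.
  by case/memv_addP=> u uU [_ /vlineP [l ->] ->]; apply: Scl => //; apply: US.
have /eqP -> : U == (U + <[x]>)%VS.
  by rewrite eqEdim addvSl; apply: Umax; exists (U + <[x]>)%VS.
by rewrite (subvP (addvSr U _)) ?memv_line.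
Qed.

Lemma affine_closed_vspace (B : V -> Prop) (a : V) :
  B a -> affine_closed B -> exists U : {vspace V}, forall y, B y <-> y - a \in U.
Proof.
move=> Ba affB.
have B0 : B (0 + a) by rewrite add0r.
have Bcl x y l : B (x + a) -> B (y + a) -> B (x + l *: y + a).
  by move=> Bx By; have := affB _ _ _ l Bx By Ba; rewrite addrK addrAC.
have [U BU] := @linear_closed_vspace (fun y => B (y + a)) B0 Bcl.
by exists U => y; rewrite -BU subrK.
Qed.

(* Descending chain condition: in a chain of nonempty affine subsets of a
   finite-dimensional space there is a least one, namely a member whose
   direction has minimal dimension. *)
Lemma affine_chain_least (I : Type) (A : I -> Prop) (X : I -> V -> Prop) :
  (forall i, A i -> (exists y, X i y) /\ affine_closed (X i)) ->
  (forall i j, A i -> A j ->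
     (forall y, X i y -> X j y) \/ (forall y, X j y -> X i y)) ->
  (exists i, A i) ->
  exists2 i0, A i0 & forall j, A j -> forall y, X i0 y -> X j y.
Proof.
move=> Xok Xtot [i Ai].
have Xrep j : A j -> exists a (U : {vspace V}), forall y, X j y <-> y - a \in U.
  move=> Aj; have [[a Xa] affX] := Xok j Aj.
  by have [U XU] := affine_closed_vspace Xa affX; exists a, U.
pose Q n := exists j a (U : {vspace V}),
  [/\ A j, forall y, X j y <-> y - a \in U & \dim U = n].
have [a [U XU]] := Xrep i Ai.
have QU : Q (\dim U) by exists i, a, U.
have [_ [i0 [a0 [U0 [Ai0 X0U0 <-]]]] U0min] := ex_minn_prop QU.
exists i0 => // j Aj.
case: (Xtot i0 j Ai0 Aj) => [//|Xj_sub].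
have [a1 [U1 X1U1]] := Xrep j Aj.
have Xj_a1 : X j a1 by apply/X1U1; rewrite subrr mem0v.
have a1U0 : a1 - a0 \in U0 by apply/X0U0/Xj_sub.
have U1U0 : (U1 <= U0)%VS.
  apply/subvP => u uU1.
  have Xu : X i0 (u + a1) by apply/Xj_sub/X1U1; rewrite addrK.
  have := memvB (proj1 (X0U0 _) Xu) a1U0.
  by rewrite opprB addrA subrK addrK.
have /eqP U1E : U1 == U0.
  by rewrite eqEdim U1U0; apply: U0min; exists j, a1, U1.
move=> y /X0U0 yU0; apply/X1U1; rewrite U1E.
by have := memvB yU0 a1U0; rewrite opprB addrA subrK.
Qed.

End AffineSubsets.

Definition scale_by (k : fieldType) (V : vectType k) (v : V) (a : k^o) : V := a *: v.
Lemma scale_by_linear (k : fieldType) (V : vectType k) (v : V) : linear (scale_by v).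
Proof. by move=> a x y; rewrite /scale_by scalerDl scalerA. Qed.
HB.instance Definition _ (k : fieldType) (V : vectType k) (v : V) :=
  GRing.isLinear.Build k k^o V *:%R (scale_by v) (scale_by_linear v).

Section PersistenceModule.
Variables (k : fieldType) (d : Order.disp_t) (P : porderType d) (M : pfdmod k P).
Local Notation MO := (pm_obj M).
Local Notation Fm h := (pm_map M h).

Lemma pm_map_irr (p q : P) (h1 h2 : (p <= q)%O) : Fm h1 = Fm h2.
Proof. by rewrite (bool_irrelevance h1 h2). Qed.

Lemma pm_map_compE (p q r : P) (hpq : (p <= q)%O) (hqr : (q <= r)%O)
    (hpr : (p <= r)%O) (x : MO p) :
  Fm hpr x = Fm hqr (Fm hpq x).
Proof. by rewrite (pm_comp M hpq hqr hpr) comp_lfunE. Qed.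

Definition system : Type := forall p : P, MO p -> Prop.

Definition coherent (B : system) : Prop :=
  [/\ forall p, exists x, B p x,
      forall p, affine_closed (B p),
      forall p q (h : (p <= q)%O) z, B p z -> B q (Fm h z) &
      forall p q (h : (p <= q)%O) w, B q w -> exists2 z, B p z & Fm h z = w].

Definition subsystem (B B' : system) : Prop := forall p y, B p y -> B' p y.

(* The intersection of a nonempty chain of coherent systems is coherent: at each
   point the chain has a least member, by the descending chain condition. *)
Lemma coherent_chain_meet (I : Type) (A : I -> Prop) (S : I -> system) :
  (exists i, A i) -> (forall i, A i -> coherent (S i)) ->
  (forall i j, A i -> A j -> subsystem (S i) (S j) \/ subsystem (S j) (S i)) ->
  coherent (fun p y => forall i, A i -> S i p y).
Proof.
move=> A_ne Scoh Stot.
have least p : exists2 i0, A i0 & forall j, A j -> forall y, S i0 p y -> S j p y.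
  apply: (affine_chain_least (X := fun i => S i p)) => //.
  - by move=> i /Scoh [ne aff _ _]; split; [exact: ne | exact: aff].
  - by move=> i j Ai Aj; case: (Stot i j Ai Aj) => sub; [left|right]; apply: sub.
split.
- move=> p; have [i0 Ai0 i0_least] := least p.
  have [ne _ _ _] := Scoh i0 Ai0; have [y Sy] := ne p.
  by exists y => j Aj; apply: i0_least.
- by move=> p x y z l Sx Sy Sz i Ai; have [_ aff _ _] := Scoh i Ai; apply: aff; auto.
- by move=> p q h z Sz i Ai; have [_ _ fw _] := Scoh i Ai; apply: fw; auto.
- move=> p q h w Sw; have [ip Aip ip_least] := least p.
  have [_ _ _ bw] := Scoh ip Aip; have [z ipz <-] := bw _ _ h _ (Sw ip Aip).
  by exists z => // j Aj; apply: ip_least.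
Qed.

Section InverseLimit.
Hypothesis codir : codirected P.

Definition through (B : system) (p : P) (a : MO p) : system :=
  fun q y => exists r (hrp : (r <= p)%O) (hrq : (r <= q)%O) z,
    [/\ B r z, Fm hrp z = a & Fm hrq z = y].
Arguments through B {p} a.

Lemma through_at (B : system) (p q r : P) (a : MO p) (y : MO q)
    (hrp : (r <= p)%O) (hrq : (r <= q)%O) :
  coherent B -> through B a q y ->
  exists2 z, B r z & Fm hrp z = a /\ Fm hrq z = y.
Proof.
case=> _ _ fw bw [r1 [h1p [h1q [z1 [Bz1 z1a z1y]]]]].
have [s [hsr hsr1]] := codir r r1.
have [z Bz zz1] := bw _ _ hsr1 _ Bz1.
exists (Fm hsr z); first exact: fw.
have [hsp hsq] := (le_trans hsr1 h1p, le_trans hsr1 h1q).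
by rewrite -(pm_map_compE hsr hrp hsp) -(pm_map_compE hsr hrq hsq)
  (pm_map_compE hsr1 h1p) (pm_map_compE hsr1 h1q) zz1.
Qed.

Lemma through_coherent (B : system) (p : P) (a : MO p) :
  coherent B -> B p a -> coherent (through B a).
Proof.
move=> Bcoh Ba; have [_ aff fw bw] := Bcoh; split.
- move=> q; have [r [hrp hrq]] := codir p q.
  have [z Bz za] := bw _ _ hrp _ Ba.
  by exists (Fm hrq z), r, hrp, hrq, z.
- move=> q x y z l Tx Ty Tz; have [r [hrp hrq]] := codir p q.
  have [zx Bzx [zxa <-]] := through_at hrp hrq Bcoh Tx.
  have [zy Bzy [zya <-]] := through_at hrp hrq Bcoh Ty.
  have [zz Bzz [zza <-]] := through_at hrp hrq Bcoh Tz.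
  exists r, hrp, hrq, (zx + l *: (zy - zz)); split; first exact: aff.
    by rewrite linearD linearZ linearB /= zxa zya zza subrr scaler0 addr0.
  by rewrite linearD linearZ linearB.
- move=> q q' h y [r [hrp [hrq [z [Bz za zy]]]]].
  by exists r, hrp, (le_trans hrq h), z; rewrite (pm_map_compE hrq h) zy.
- move=> q q' h w Tw; have [r [hrp hrq]] := codir p q.
  have hrq' := le_trans hrq h.
  have [z Bz [za zw]] := through_at hrp hrq' Bcoh Tw.
  exists (Fm hrq z); first by exists r, hrp, hrq, z.
  by rewrite -pm_map_compE.
Qed.

Lemma through_sub (B : system) (p : P) (a : MO p) :
  coherent B -> subsystem (through B a) B.
Proof. by case=> _ _ fw _ q y [r [hrp [hrq [z [Bz _ <-]]]]]; apply: fw. Qed.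

Lemma through_self (B : system) (p : P) (a y : MO p) : through B a p y -> y = a.
Proof. by case=> r [hrp [hrq [z [_ <- <-]]]]; rewrite (pm_map_irr hrp hrq). Qed.

Hypothesis surj : forall (p q : P) (h : (p <= q)%O) (w : MO q),
  exists v, Fm h v = w.

(* The inverse limit of M surjects onto every M_p0: by Zorn's lemma there is a
   minimal coherent system with only [x0] at p0, and minimality forces it to be a
   single compatible family. *)
Lemma limit_exists (p0 : P) (x0 : MO p0) :
  exists v : forall p, MO p,
    (forall p q (h : (p <= q)%O), Fm h (v p) = v q) /\ v p0 = x0.
Proof.
have full : coherent (fun p (_ : MO p) => True).
  split=> // [p|p q h w _]; first by exists 0.
  by have [v vw] := surj h w; exists v.
pose T := {B : system | coherent B /\ forall y, B p0 y -> y = x0}.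
have t0 : T.
  by exists (through (fun p (_ : MO p) => True) x0); split;
    [exact: through_coherent | move=> y; apply: through_self].
pose R (s t : T) := `[< subsystem (sval t) (sval s) >].
have Rrefl s : R s s by apply/asboolP.
have Rtrans r s t : R r s -> R s t -> R r t.
  by move=> /asboolP rs /asboolP st; apply/asboolP => p y /st /rs.
have Rchain (A : set T) : total_on A R -> exists t, forall s, A s -> R s t.
  move=> Atot; case: (pselect (exists s, A s)) => [A_ne|A_0]; last first.
    by exists t0 => s As; case: A_0; exists s.
  have Atot' s t : A s -> A t ->
      subsystem (sval s) (sval t) \/ subsystem (sval t) (sval s).
    by move=> As At; case: (Atot s t As At) => /asboolP; [right|left].
  have meet_coh := coherent_chain_meet A_ne (fun s _ => proj1 (svalP s)) Atot'.
  have [s0 As0] := A_ne.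
  have meet_p0 y : (forall s, A s -> sval s p0 y) -> y = x0.
    by move=> meet_y; apply: (proj2 (svalP s0)); apply: meet_y.
  pose meet := fun p y => forall s, A s -> sval s p y.
  by exists (exist _ meet (conj meet_coh meet_p0)) => s As; apply/asboolP => p y; apply.
have [t tmax] := ZL_preorder t0 Rrefl Rtrans Rchain.
have [tcoh tp0] := svalP t.
have t_single p a y : sval t p a -> sval t p y -> y = a.
  move=> ta ty.
  have thr_p0 y' : through (sval t) a p0 y' -> y' = x0.
    by move/(through_sub tcoh); apply: tp0.
  pose s : T :=
    exist _ (through (sval t) a) (conj (through_coherent tcoh ta) thr_p0).
  have Rts : R t s by apply/asboolP; apply: through_sub.
  by have /asboolP st := tmax s Rts; apply: through_self; apply: st.
have [t_ne _ fw _] := tcoh.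
pose v p := sval (cid (t_ne p)).
have tv p : sval t p (v p) := svalP (cid (t_ne p)).
exists v; split=> [p q h|]; last exact: tp0.
by apply: t_single => //; apply: fw.
Qed.

End InverseLimit.

Section ConstantSummand.
Hypothesis dir : directed P.
Hypothesis surj : forall (p q : P) (h : (p <= q)%O) (w : MO q),
  exists v, Fm h v = w.

Definition dimM (p : P) : nat := \dim {:MO p}.

Lemma dim_ker_map (p q : P) (h : (p <= q)%O) :
  (\dim (lker (Fm h)) + dimM q)%N = dimM p.
Proof.
have Fh_onto : limg (Fm h) = fullv.
  apply/eqP; rewrite eqEsubv subvf; apply/subvP => w _.
  by have [v <-] := surj h w; apply/memv_img/memvf.
by have := limg_ker_dim (Fm h) fullv; rewrite capfv Fh_onto.
Qed.

Lemma map_injective_of_min (r t : P) (h : (r <= t)%O) :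
  (forall q, dimM r <= dimM q)%N -> injective (Fm h).
Proof.
move=> rmin; apply/lker0P; rewrite -dimv_eq0.
by have := dim_ker_map h; have := rmin t; lia.
Qed.

Lemma dim_min_up (r t : P) (h : (r <= t)%O) :
  (forall q, dimM r <= dimM q)%N -> (forall q, dimM t <= dimM q)%N.
Proof. by move=> rmin q; have := dim_ker_map h; have := rmin q; lia. Qed.

Variables (p0 : P) (v : forall p, MO p).
Hypothesis p0_min : forall q, (dimM p0 <= dimM q)%N.
Hypothesis v_compat : forall p q (h : (p <= q)%O), Fm h (v p) = v q.
Hypothesis v_p0 : v p0 != 0.

Lemma map_injective_above (a b : P) (h : (a <= b)%O) : (p0 <= a)%O -> injective (Fm h).
Proof. by move=> p0a; apply/map_injective_of_min/(dim_min_up p0a). Qed.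
Arguments map_injective_above {a b} h.

Lemma v_neq0 (q : P) : v q != 0.
Proof.
have [t [hqt hp0t]] := dir q p0.
apply: contra v_p0 => /eqP vq0; apply/eqP.
apply: (map_injective_above hp0t (lexx p0)).
by rewrite linear0 v_compat -(v_compat hqt) vq0 linear0.
Qed.

Definition agree (p : P) (x : MO p) (y : MO p0) : Prop :=
  exists t (hpt : (p <= t)%O) (hp0t : (p0 <= t)%O), Fm hpt x = Fm hp0t y.

(* Since maps above p0 are injective, agreement at one common upper bound
   implies agreement at all of them. *)
Lemma agree_everywhere (p : P) (x : MO p) (y : MO p0) :
  agree x y -> forall s (hps : (p <= s)%O) (hp0s : (p0 <= s)%O),
    Fm hps x = Fm hp0s y.
Proof.
case=> t [hpt [hp0t xy]] s hps hp0s.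
have [u [htu hsu]] := dir t s.
apply: (map_injective_above hsu hp0s).
rewrite -(pm_map_compE hps hsu (le_trans hpt htu)).
rewrite -(pm_map_compE hp0s hsu (le_trans hp0t htu)).
by rewrite (pm_map_compE hpt htu) (pm_map_compE hp0t htu) xy.
Qed.

Lemma agree_unique (p : P) (x : MO p) (y1 y2 : MO p0) :
  agree x y1 -> agree x y2 -> y1 = y2.
Proof.
move=> xy1 [t [hpt [hp0t xy2]]].
by apply: (map_injective_above hp0t (lexx p0)); rewrite -xy2 (agree_everywhere xy1).
Qed.

Lemma agree_v (p : P) (l : k) : agree (l *: v p) (l *: v p0).
Proof.
have [t [hpt hp0t]] := dir p p0.
by exists t, hpt, hp0t; rewrite !linearZ /= !v_compat.
Qed.

Definition ub (p : P) : P := sval (cid (dir p p0)).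
Lemma le_ub (p : P) : (p <= ub p)%O. Proof. exact: (svalP (cid (dir p p0))).1. Qed.
Lemma p0_le_ub (p : P) : (p0 <= ub p)%O. Proof. exact: (svalP (cid (dir p p0))).2. Qed.

Definition compl0 : {vspace MO p0} := (<[v p0]>^C)%VS.
Definition compl (p : P) : {vspace MO p} :=
  (Fm (le_ub p) @^-1: (Fm (p0_le_ub p) @: compl0))%VS.

(* Intrinsic description of the complement, independent of the chosen bound. *)
Lemma memv_compl (p : P) (x : MO p) :
  x \in compl p <-> exists2 y, y \in compl0 & agree x y.
Proof.
rewrite /compl -memv_preim; split.
  by case/memv_imgP=> y y0 xy; exists y => //; exists (ub p), (le_ub p), (p0_le_ub p).
by case=> y y0 xy; rewrite (agree_everywhere xy (le_ub p) (p0_le_ub p)) memv_img.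
Qed.

Lemma line_submod : is_submod (fun p => <[v p]>%VS).
Proof.
move=> p q h; apply/subvP => _ /memv_imgP [x /vlineP [l ->] ->].
by rewrite linearZ /= v_compat memvZ ?memv_line.
Qed.

Lemma compl_submod : is_submod compl.
Proof.
move=> p q h; apply/subvP => _ /memv_imgP [x /memv_compl [y y0 xy] ->].
apply/memv_compl; exists y => //.
have [t [hqt hp0t]] := dir q p0.
exists t, hqt, hp0t.
by rewrite -(pm_map_compE h hqt (le_trans h hqt)) (agree_everywhere xy).
Qed.

(* Every x in M_p splits as (its coordinate along [v p0], read at p0) plus an
   element of the complement. *)
Lemma line_compl_full (p : P) : (<[v p]> + compl p)%VS = fullv.
Proof.
apply/eqP; rewrite eqEsubv subvf; apply/subvP => x _.
have [y yx] := surj (p0_le_ub p) (Fm (le_ub p) x).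
have : y \in (<[v p0]> + compl0)%VS by rewrite addv_complf memvf.
case/memv_addP => _ /vlineP [l ->] [c c0 yE].
rewrite -(subrK (l *: v p) x) addrC memv_add ?memvZ ?memv_line //.
apply/memv_compl; exists c => //; exists (ub p), (le_ub p), (p0_le_ub p).
rewrite linearB linearZ /= v_compat -yx yE linearD linearZ /=.
by rewrite -(v_compat (p0_le_ub p)) addrAC subrr add0r.
Qed.

(* The sum is direct: a multiple of [v p] in the complement agrees with the same
   multiple of [v p0] in compl0, which must vanish. *)
Lemma line_compl_cap (p : P) : (<[v p]> :&: compl p)%VS = 0%VS.
Proof.
apply/eqP; rewrite -subv0; apply/subvP => _ /memv_capP [/vlineP [l ->]].
case/memv_compl => y y0 xy; rewrite (agree_unique xy (agree_v p l)) in y0.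
have : l *: v p0 \in (<[v p0]> :&: compl0)%VS by rewrite memv_cap memvZ ?memv_line.
by rewrite capv_compl !memv0 !scaler_eq0 (negbTE v_p0) (negbTE (v_neq0 p)).
Qed.

Definition line_param (p : P) : 'Hom(k^o, MO p) := linfun (scale_by (v p)).

Lemma line_paramE (p : P) (a : k^o) : line_param p a = a *: v p.
Proof. by rewrite lfunE. Qed.

Lemma line_param_morph : @is_morph k d P (kP k P) M line_param.
Proof.
move=> p q h; apply/lfunP => a.
by rewrite !comp_lfunE /= !line_paramE id_lfunE linearZ /= v_compat.
Qed.

Lemma line_param_iso (p : P) :
  lker (line_param p) = 0%VS /\ limg (line_param p) = <[v p]>%VS.
Proof.
split; apply/eqP.
  apply/lker0P => a b; rewrite !line_paramE => /eqP.
  by rewrite -subr_eq0 -scalerBl scaler_eq0 (negbTE (v_neq0 p)) orbF subr_eq0 => /eqP.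
rewrite eqEsubv; apply/andP; split; apply/subvP => y.
  by case/memv_imgP => a _ ->; rewrite line_paramE memvZ ?memv_line.
by case/vlineP => l ->; rewrite -line_paramE memv_img ?memvf.
Qed.

Lemma constant_summand : has_summand_iso M (kP k P).
Proof.
exists (fun p => <[v p]>%VS), compl, line_param; split.
- exact: line_submod.
- exact: compl_submod.
- by move=> p; split; [apply: line_compl_full | apply: line_compl_cap].
- exact: line_param_morph.
- exact: line_param_iso.
Qed.

End ConstantSummand.
End PersistenceModule.

Unset Implicit Arguments.
Set Strict Implicit.

Theorem lemma2p3 (k : fieldType) (d : Order.disp_t) (P : porderType d)
  (M : pfdmod k P) :
  directed P -> codirected P ->
  (forall p : P, (fullv : {vspace pm_obj M p}) != 0%VS) ->
  (forall (p q : P) (h : (p <= q)%O) (w : pm_obj M q),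
      exists v : pm_obj M p, pm_map M h v = w) ->
  has_summand_iso M (kP k P).
Proof.
move=> dir codir M_neq0 surj.
(* over the empty poset the zero submodules do *)
have [[p1 _] | P_empty] := pselect (exists p : P, True); last first.
  by exists (fun _ => 0%VS), (fun _ => 0%VS), (fun _ => 0); split=> p;
    case: P_empty; exists p.
have [_ [p0 <-] p0_least] :=
  @ex_minn_prop (fun n => exists p, dimM M p = n) _ (ex_intro _ p1 erefl).
have p0_min q : (dimM M p0 <= dimM M q)%N by apply: p0_least; exists q.
have [v [v_compat v_p0]] := limit_exists codir surj (vpick {:pm_obj M p0}).
apply: (constant_summand dir surj p0_min v_compat).
by rewrite v_p0 vpick0.
Qed.
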